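(* Let $G$ be a graph such that the elementary algebraic cycles of $G$ are the circuits of a matroid $M$ on $E(G)$ (the algebraic cycle matroid of $G$). Then the cocircuits of $M$ are precisely the skew cuts of $G$.
   Context: Matroids may be infinite: a matroid on $E$ is given by $\mathcal I\subseteq 2^E$ with $\emptyset\in\mathcal I$; $\mathcal I$ closed under subsets; for non-maximal $I\in\mathcal I$ and maximal $I'\in\mathcal I$ some $x\in I'\setminus I$ has $I\cup\{x\}\in\mathcal I$; and for every $I\in\mathcal I$ and $I\subseteq X\subseteq E$ the set $\{I'\in\mathcal I:I\subseteq I'\subseteq X\}$ has a maximal element. Circuits are minimal dependent sets; the dual $M^*$ has as bases the complements of bases of $M$; cocircuits of $M$ are the circuits of $M^*$. Graphs may have parallel edges and loops. The elementary algebraic cycles of $G$ are the edge sets of the finite cycles and of the double rays (two-way infinite paths) of $G$. A ray is a one-way infinite path. A cut $E(A,B)$ is the set of edges between the classes $A,B$ of a partition of $V(G)$. A side $A$ of a cut is small if the induced subgraph $G[A]$ contains no ray. A non-empty cut $F$ is skew if one of its sides is small and $F$ is minimal with this property among the non-empty cuts of $G$ (no non-empty cut properly contained in $F$ has a small side). *)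

(* sets are predicates T -> Prop; graphs and matroids may be infinite. *)
From Stdlib Require Import ZArith Arith.

Set Implicit Arguments.

Section Sets.
Context {T : Type}.
Definition subset (A B : T -> Prop) : Prop := forall x, A x -> B x.
Definition seteq (A B : T -> Prop) : Prop := subset A B /\ subset B A.
Definition psubset (A B : T -> Prop) : Prop := subset A B /\ ~ subset B A.
Definition maximal_in (F : (T -> Prop) -> Prop) (X : T -> Prop) : Prop :=
  F X /\ forall Y, F Y -> subset X Y -> subset Y X.
End Sets.

Section Matroid.
Context {E : Type}.
Variable I : (E -> Prop) -> Prop.

Definition is_matroid : Prop :=
  I (fun _ => False) /\
  (forall A B, I B -> subset A B -> I A) /\
  (forall A B, I A -> ~ maximal_in I A -> maximal_in I B ->
     exists x, B x /\ ~ A x /\ I (fun y => A y \/ y = x)) /\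
  (forall A X, I A -> subset A X ->
     exists Mx, maximal_in (fun J => I J /\ subset A J /\ subset J X) Mx).

Definition is_base (B : E -> Prop) : Prop := maximal_in I B.

Definition is_circuit (C : E -> Prop) : Prop :=
  ~ I C /\ forall D, subset D C -> ~ I D -> subset C D.

(* the dual M^*: its bases are the complements of bases of M, so its
   independent sets are the subsets of such complements *)
Definition dual_indep (J : E -> Prop) : Prop :=
  exists B, is_base B /\ forall x, J x -> ~ B x.

End Matroid.
Definition is_cocircuit {E : Type} (I : (E -> Prop) -> Prop) (D : E -> Prop) : Prop :=
  is_circuit (dual_indep I) D.

Section Graph.
Context {V E : Type}.
Variable ends : E -> V * V.

Definition joins (e : E) (u w : V) : Prop := ends e = (u, w) \/ ends e = (w, u).

(* edge set of a finite cycle (length n >= 1; n = 1 a loop, n = 2 two parallel edges) *)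
Definition finite_cycle_edges (C : E -> Prop) : Prop :=
  exists (n : nat) (v : nat -> V) (f : nat -> E),
    0 < n /\
    (forall i j, i < n -> j < n -> v i = v j -> i = j) /\
    (forall i j, i < n -> j < n -> f i = f j -> i = j) /\
    (forall i, i < n -> joins (f i) (v i) (v ((i + 1) mod n))) /\
    (forall e, C e <-> exists i, i < n /\ f i = e).

Definition double_ray_edges (C : E -> Prop) : Prop :=
  exists (v : Z -> V) (f : Z -> E),
    (forall i j, v i = v j -> i = j) /\
    (forall i, joins (f i) (v i) (v (i + 1)%Z)) /\
    (forall e, C e <-> exists i, f i = e).

Definition elementary_algebraic_cycle (C : E -> Prop) : Prop :=
  finite_cycle_edges C \/ double_ray_edges C.

Definition cut (A : V -> Prop) : E -> Prop :=
  fun e => exists u w, joins e u w /\ A u /\ ~ A w.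

Definition has_ray_in (A : V -> Prop) : Prop :=
  exists v : nat -> V,
    (forall i j, v i = v j -> i = j) /\
    (forall n, A (v n) /\ exists e, joins e (v n) (v (S n))).

Definition cut_with_small_side (F : E -> Prop) : Prop :=
  exists A : V -> Prop, seteq F (cut A) /\ ~ has_ray_in A.

Definition skew_cut (F : E -> Prop) : Prop :=
  (exists e, F e) /\ cut_with_small_side F /\
  forall F', (exists e, F' e) -> psubset F' F -> ~ cut_with_small_side F'.
End Graph.

(* A circuit and a cocircuit of a matroid never meet in exactly one element, and
   conversely a nonempty set meeting no circuit in exactly one element meets every
   base (look at the fundamental circuit of one of its elements).  A cut with a small
   side meets no elementary algebraic cycle exactly once: a finite cycle crosses a cut
   an even number of times, and a double ray crossing it once would leave a tail in
   the small side.  So such cuts are codependent, and skew cuts contain cocircuits.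
   Conversely, a cocircuit D separates the ends of each of its edges in G - D (a path
   plus that edge is a cycle meeting D once), and the two components cannot both
   contain rays (two rays plus the edge form a double ray meeting D once).  Hence D
   contains, and by minimality equals, the cut around a small component.  Minimality
   of skew cuts and of cocircuits then correspond. *)

From Stdlib Require Import Classical ClassicalEpsilon Lia ZArith Arith Wf_nat Relations.

Section MatroidFacts.
Context {E : Type} (Ind : (E -> Prop) -> Prop).
Hypothesis matroid_Ind : is_matroid Ind.

Lemma indep_empty : Ind (fun _ => False).
Proof. apply matroid_Ind. Qed.

Lemma indep_subset A B : Ind B -> subset A B -> Ind A.
Proof. destruct matroid_Ind as [_ [Hsub _]]; apply Hsub. Qed.

Lemma indep_augment A B : Ind A -> ~ maximal_in Ind A -> is_base Ind B ->
  exists x, B x /\ ~ A x /\ Ind (fun y => A y \/ y = x).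
Proof. destruct matroid_Ind as [_ [_ [Haug _]]]; apply Haug. Qed.

Lemma indep_extend A X : Ind A -> subset A X ->
  exists K, maximal_in (fun J => Ind J /\ subset A J /\ subset J X) K.
Proof. destruct matroid_Ind as [_ [_ [_ Hext]]]; apply Hext. Qed.

Lemma maximal_extension_saturated A X K x :
  maximal_in (fun J => Ind J /\ subset A J /\ subset J X) K -> X x -> ~ K x ->
  ~ Ind (fun y => K y \/ y = x).
Proof.
  intros [[_ [HAK HKX]] Hmax] Xx Kx Hi. apply Kx.
  apply (Hmax (fun y => K y \/ y = x)); [| intros y Ky; left; exact Ky | right; reflexivity].
  split; [exact Hi | split; [intros y Ay; left; auto | intros y [Ky | ->]; auto]].
Qed.

Lemma extend_to_base J : Ind J -> exists B, is_base Ind B /\ subset J B.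
Proof.
  intros HJ. destruct (indep_extend J (fun _ => True) HJ) as [B HB]; [intros x _; exact I |].
  exists B. destruct HB as [[HBi [HJB _]] Hmax]. split; [split | exact HJB].
  - exact HBi.
  - intros Y HY HBY. apply Hmax; [split; [exact HY | split] | exact HBY].
    + intros x Jx. apply HBY, HJB, Jx.
    + intros x _; exact I.
Qed.

Lemma base_exists : exists B, is_base Ind B.
Proof. destruct (extend_to_base _ indep_empty) as [B [HB _]]. exists B; exact HB. Qed.

Lemma base_of_saturated K B : Ind K -> is_base Ind B ->
  (forall x, B x -> ~ K x -> ~ Ind (fun y => K y \/ y = x)) -> is_base Ind K.
Proof.
  intros HK HB Hsat. apply NNPP; intro Hn.
  destruct (indep_augment K B HK Hn HB) as [x [Bx [Kx HKx]]]. exact (Hsat x Bx Kx HKx).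
Qed.

Lemma base_add_dependent B x : is_base Ind B -> ~ B x -> ~ Ind (fun y => B y \/ y = x).
Proof.
  intros [_ Hmax] Bx Hi. apply Bx, (Hmax _ Hi); [intros y By; left; exact By | right; reflexivity].
Qed.

Lemma base_del_indep B f : is_base Ind B -> Ind (fun y => B y /\ y <> f).
Proof. intros [HB _]. apply (indep_subset _ B HB). intros y [By _]; exact By. Qed.

Lemma base_del_not_maximal B f : is_base Ind B -> B f ->
  ~ maximal_in Ind (fun y => B y /\ y <> f).
Proof.
  intros [HB _] Bf [_ Hmax]. destruct (Hmax B HB (fun y Hy => proj1 Hy) f Bf) as [_ Hff].
  exact (Hff eq_refl).
Qed.

Lemma not_dual_indep_iff X :
  ~ dual_indep Ind X <-> forall B, is_base Ind B -> exists x, X x /\ B x.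
Proof.
  split.
  - intros Hn B HB. apply NNPP; intro Hdisj. apply Hn. exists B.
    split; [exact HB | intros x Xx Bx; apply Hdisj; exists x; auto].
  - intros Hmeet [B [HB Hdisj]]. destruct (Hmeet B HB) as [x [Xx Bx]]. exact (Hdisj x Xx Bx).
Qed.

Lemma fundamental_circuit B e : is_base Ind B -> ~ B e ->
  exists C, is_circuit Ind C /\ C e /\ forall x, C x -> B x \/ x = e.
Proof.
  intros HB Be.
  exists (fun x => x = e \/ (B x /\ Ind (fun y => (B y \/ y = e) /\ y <> x))).
  split; [split | split; [left; reflexivity | intros x [-> | [Bx _]]; auto]].
  - intro HC.
    destruct (indep_extend _ (fun y => B y \/ y = e) HC) as [K HK];
      [intros x [-> | [Bx _]]; auto |].
    pose proof HK as [[HKi [HCK HKX]] _].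
    assert (HKB : is_base Ind K).
    { apply (base_of_saturated K B HKi HB). intros x Bx Kx.
      exact (maximal_extension_saturated _ _ K x HK (or_introl Bx) Kx). }
    assert (Ht : exists t, B t /\ ~ K t).
    { apply NNPP; intro Hn. apply (base_add_dependent B e HB Be), (indep_subset _ K HKi).
      intros y [By | ->]; [| apply HCK; left; reflexivity].
      apply NNPP; intro Ky. apply Hn; eauto. }
    destruct Ht as [t [Bt Kt]].
    destruct (indep_augment _ K (base_del_indep B t HB) (base_del_not_maximal B t HB Bt) HKB)
      as [x [Kx [Hx Hxi]]].
    destruct (HKX x Kx) as [Bx | ->].
    + apply Hx. split; [exact Bx | intros ->; exact (Kt Kx)].
    + apply Kt, HCK. right. split; [exact Bt |].
      apply (indep_subset _ _ Hxi). intros y [[By | ->] Hyt]; [left; split | right]; auto.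
  - intros D HDC HD x Cx. apply NNPP; intro Dx. apply HD.
    destruct Cx as [-> | [Bx Hx]].
    + apply (indep_subset D B); [apply HB |].
      intros y Dy. destruct (HDC y Dy) as [-> | [By _]]; [contradiction | exact By].
    + apply (indep_subset D _ Hx). intros y Dy. split.
      * destruct (HDC y Dy) as [-> | [By _]]; auto.
      * intros ->. contradiction.
Qed.

Lemma circuit_cocircuit_not_single C D e :
  is_circuit Ind C -> is_cocircuit Ind D -> C e -> D e -> ~ (forall x, C x -> D x -> x = e).
Proof.
  intros [HCd HCm] [HDd HDm] Ce De Hx.
  assert (HCe : Ind (fun y => C y /\ y <> e)).
  { apply NNPP; intro Hn. destruct (HCm _ (fun y Hy => proj1 Hy) Hn e Ce) as [_ Hee].
    exact (Hee eq_refl). }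
  assert (HDe : dual_indep Ind (fun y => D y /\ y <> e)).
  { apply NNPP; intro Hn. destruct (HDm _ (fun y Hy => proj1 Hy) Hn e De) as [_ Hee].
    exact (Hee eq_refl). }
  destruct HDe as [B [HB HBD]].
  destruct (indep_extend _ (fun y => ~ D y) HCe) as [K HK].
  { intros y [Cy Hye] Dy. exact (Hye (Hx y Cy Dy)). }
  pose proof HK as [[HKi [HCK HKD]] _].
  apply HDd. exists K. split; [| intros x Dx Kx; exact (HKD x Kx Dx)].
  apply (base_of_saturated K B HKi HB). intros x Bx Kx Hi.
  destruct (classic (x = e)) as [-> | Hxe].
  - apply HCd, (indep_subset _ _ Hi). intros y Cy.
    destruct (classic (y = e)); [right | left; apply HCK]; auto.
  - apply (maximal_extension_saturated _ _ K x HK); auto.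
    intro Dx. exact (HBD x (conj Dx Hxe) Bx).
Qed.

(* The fundamental cocircuit of an element f of a base B: f together with the
   elements x outside B for which B - f + x is again a base. *)
Lemma cocircuit_in_codependent D : ~ dual_indep Ind D ->
  exists D', is_cocircuit Ind D' /\ subset D' D.
Proof.
  intros HD.
  destruct (indep_extend _ (fun y => ~ D y) indep_empty) as [J HJ]; [intros x [] |].
  pose proof HJ as [[HJi [_ HJD]] _].
  destruct (extend_to_base J HJi) as [B [HB HJB]].
  destruct (proj1 (not_dual_indep_iff D) HD B HB) as [f [Df Bf]].
  exists (fun x => x = f \/ (~ B x /\ Ind (fun y => (B y /\ y <> f) \/ y = x))).
  split; [split |].
  - apply not_dual_indep_iff. intros B' HB'.
    destruct (indep_augment _ B' (base_del_indep B f HB) (base_del_not_maximal B f HB Bf) HB')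
      as [x [B'x [Hx Hxi]]].
    exists x. split; [| exact B'x].
    destruct (classic (x = f)) as [-> | Hxf]; [left; reflexivity |].
    right. split; [intro Bx; apply Hx; split; auto | exact Hxi].
  - intros D2 HD2 HD2d x D'x. apply NNPP; intro D2x. apply HD2d.
    destruct D'x as [-> | [Bx Hxi]].
    + exists B. split; [exact HB |].
      intros y D2y By. destruct (HD2 y D2y) as [-> | [Hy _]]; [contradiction | exact (Hy By)].
    + exists (fun y => (B y /\ y <> f) \/ y = x). split.
      * apply (base_of_saturated _ B Hxi HB). intros z Bz Hz Hzi.
        assert (z = f) as -> by (apply NNPP; intro; apply Hz; left; split; auto).
        apply (base_add_dependent B x HB Bx), (indep_subset _ _ Hzi).
        intros y [By | ->]; [destruct (classic (y = f)); [right | left; left; split] | left; right]; auto.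
      * intros y D2y [[By Hyf] | ->]; [| contradiction].
        destruct (HD2 y D2y) as [-> | [Hy _]]; [exact (Hyf eq_refl) | exact (Hy By)].
  - intros x [-> | [Bx Hxi]]; [exact Df |]. apply NNPP; intro Dx.
    apply Bx, HJB. apply NNPP; intro Jx.
    apply (maximal_extension_saturated _ _ J x HJ Dx Jx), (indep_subset _ _ Hxi).
    intros y [Jy | ->]; [left; split; [apply HJB, Jy | intros ->; exact (HJD f Jy Df)] | right]; auto.
Qed.

End MatroidFacts.

Section Graphs.
Context {V E : Type} (ends : E -> V * V).

Lemma joins_sym e u w : joins ends e u w -> joins ends e w u.
Proof. unfold joins; tauto. Qed.

Lemma joins_same_edge e a b c d : joins ends e a b -> joins ends e c d ->
  (a = c /\ b = d) \/ (a = d /\ b = c).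
Proof.
  unfold joins; intros [H1 | H1] [H2 | H2]; rewrite H1 in H2; injection H2; intros; subst; auto.
Qed.

Lemma cut_iff_sides A e a b : joins ends e a b -> (cut ends A e <-> ~ (A a <-> A b)).
Proof.
  intros Hab. split.
  - intros [u [w [Huw [Hu Hw]]]].
    destruct (joins_same_edge e u w a b Huw Hab) as [[<- <-] | [<- <-]]; tauto.
  - intros Hsides. destruct (classic (A a)) as [Ha | Ha].
    + exists a, b. tauto.
    + exists b, a. split; [apply joins_sym, Hab | tauto].
Qed.

Definition cycle_orthogonal (D : E -> Prop) : Prop :=
  forall C e, elementary_algebraic_cycle ends C -> C e -> D e ->
  ~ (forall x, C x -> D x -> x = e).

Lemma iff_chain (P : nat -> Prop) lo hi : lo <= hi ->
  (forall i, lo <= i < hi -> (P i <-> P (S i))) -> (P lo <-> P hi).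
Proof.
  intros Hle Hstep. induction hi as [| hi IH].
  - replace lo with 0 by lia. tauto.
  - destruct (Nat.eq_dec lo (S hi)) as [-> | Hne]; [tauto |].
    assert (Hlo : P lo <-> P hi) by (apply IH; [lia | intros i Hi; apply Hstep; lia]).
    rewrite Hlo. apply Hstep. lia.
Qed.

Lemma finite_cycle_cut_orthogonal A C e :
  finite_cycle_edges ends C -> cut ends A e -> C e -> ~ (forall x, C x -> cut ends A x -> x = e).
Proof.
  intros [n [v [f [Hn [_ [Hf [Hj HC]]]]]]] He Ce Honly.
  destruct (proj1 (HC e) Ce) as [k [Hk <-]].
  (* going once around from v (k+1) back to v k uses every edge but f k *)
  assert (Hround : A (v ((k + 1) mod n)) <-> A (v ((n + k) mod n))).
  { apply (iff_chain (fun i => A (v (i mod n)))); [lia |]. intros i Hi.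
    assert (Hik : i mod n <> k).
    { destruct (Nat.lt_ge_cases i n).
      - rewrite Nat.mod_small; lia.
      - rewrite <- (Nat.mod_unique i n 1 (i - n)); lia. }
    assert (Hi1 : (i mod n + 1) mod n = S i mod n)
      by (rewrite Nat.Div0.add_mod_idemp_l; f_equal; lia).
    assert (Hji := Hj (i mod n) (Nat.mod_upper_bound i n ltac:(lia))). rewrite Hi1 in Hji.
    apply NNPP. intro Hs. apply Hik, Hf; [apply Nat.mod_upper_bound; lia | exact Hk |].
    apply Honly; [apply HC; exists (i mod n); split; [apply Nat.mod_upper_bound; lia | reflexivity] |].
    apply (cut_iff_sides _ _ _ _ Hji). exact Hs. }
  rewrite <- (Nat.mod_unique (n + k) n 1 k) in Hround by lia.
  exact (proj1 (cut_iff_sides _ _ _ _ (Hj k Hk)) He (iff_sym Hround)).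
Qed.

Lemma has_ray_in_of_path A (w : nat -> V) :
  (forall i j, w i = w j -> i = j) -> A (w 0) ->
  (forall n, (A (w n) <-> A (w (S n))) /\ exists g, joins ends g (w n) (w (S n))) ->
  has_ray_in ends A.
Proof.
  intros Hw H0 Hs. exists w. split; [exact Hw |]. intro n. split; [| apply Hs].
  induction n; [exact H0 | apply (proj1 (Hs n)), IHn].
Qed.

Lemma double_ray_cut_orthogonal A C e :
  double_ray_edges ends C -> cut ends A e -> C e ->
  (forall x, C x -> cut ends A x -> x = e) -> has_ray_in ends A.
Proof.
  intros [v [f [Hv [Hj HC]]]] He Ce Honly.
  destruct (proj1 (HC e) Ce) as [k <-].
  assert (Hside : forall i, i <> k -> (A (v i) <-> A (v (i + 1)%Z))).
  { intros i Hik. apply NNPP. intro Hs. apply Hik.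
    assert (Hfi : f i = f k)
      by (apply Honly; [apply HC; exists i; reflexivity | apply (cut_iff_sides _ _ _ _ (Hj i)), Hs]).
    assert (Hjk := Hj k). rewrite <- Hfi in Hjk.
    destruct (joins_same_edge _ _ _ _ _ (Hj i) Hjk) as [[Hik' _] | [Hik' Hki]].
    - apply Hv, Hik'.
    - apply Hv in Hik'. apply Hv in Hki. lia. }
  assert (Hk := proj1 (cut_iff_sides _ _ _ _ (Hj k)) He).
  destruct (classic (A (v (k + 1)%Z))) as [Hk1 | Hk1].
  - apply (has_ray_in_of_path A (fun n => v (k + 1 + Z.of_nat n)%Z)).
    + intros i j Hij. apply Hv in Hij. lia.
    + replace (k + 1 + Z.of_nat 0)%Z with (k + 1)%Z by lia. exact Hk1.
    + intro n. replace (k + 1 + Z.of_nat (S n))%Z with (k + 1 + Z.of_nat n + 1)%Z by lia.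
      split; [apply Hside; lia | eexists; apply Hj].
  - apply (has_ray_in_of_path A (fun n => v (k - Z.of_nat n)%Z)).
    + intros i j Hij. apply Hv in Hij. lia.
    + replace (k - Z.of_nat 0)%Z with k by lia. tauto.
    + intro n. replace (k - Z.of_nat n)%Z with (k - Z.of_nat (S n) + 1)%Z by lia.
      split; [pose proof (Hside (k - Z.of_nat (S n))%Z ltac:(lia)); tauto | eexists; apply joins_sym, Hj].
Qed.

Lemma small_cut_cycle_orthogonal A : ~ has_ray_in ends A -> cycle_orthogonal (cut ends A).
Proof.
  intros HA C e [Hfin | Hdr] Ce He Honly.
  - exact (finite_cycle_cut_orthogonal A C e Hfin He Ce Honly).
  - exact (HA (double_ray_cut_orthogonal A C e Hdr He Ce Honly)).
Qed.

Definition adjacent_in (H : E -> Prop) (x y : V) : Prop := exists g, H g /\ joins ends g x y.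

Definition reach (H : E -> Prop) : V -> V -> Prop := clos_refl_trans V (adjacent_in H).

Definition walk (H : E -> Prop) (p : nat -> V) (f : nat -> E) (n : nat) : Prop :=
  forall i, i < n -> H (f i) /\ joins ends (f i) (p i) (p (S i)).

Lemma reach_sym H x y : reach H x y -> reach H y x.
Proof.
  induction 1 as [x y [g [Hg Hxy]] | x | x y z _ IHxy _ IHyz].
  - apply rt_step. exists g. split; [exact Hg | apply joins_sym, Hxy].
  - apply rt_refl.
  - exact (rt_trans _ _ _ _ _ IHyz IHxy).
Qed.

Lemma walk_reach H p f n m : walk H p f n -> m <= n -> reach H (p 0) (p m).
Proof.
  intros Hw. induction m as [| m IH]; intros Hm; [apply rt_refl |].
  apply (rt_trans _ _ _ (p m)); [apply IH; lia |].
  apply rt_step. exists (f m). apply Hw. lia.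
Qed.

(* The edge [g0] only serves as a dummy value of the edge sequence of an empty walk. *)
Lemma reach_walk (g0 : E) H x y : reach H x y ->
  exists p f n, p 0 = x /\ p n = y /\ walk H p f n.
Proof.
  intros Hxy. apply clos_rt_rtn1 in Hxy.
  induction Hxy as [| y z [g [Hg Hyz]] _ [p [f [n [H0 [Hn Hw]]]]]].
  - exists (fun _ => x), (fun _ => g0), 0. split; [reflexivity | split; [reflexivity | intros i Hi; lia]].
  - exists (fun i => if i =? S n then z else p i), (fun i => if i =? n then g else f i), (S n).
    split; [exact H0 | split; [rewrite Nat.eqb_refl; reflexivity |]].
    intros i Hi. destruct (Nat.eqb_spec i (S n)); [lia |].
    destruct (Nat.eqb_spec i n) as [-> | Hin].
    + rewrite Nat.eqb_refl, Hn. split; assumption.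
    + destruct (Nat.eqb_spec (S i) (S n)); [lia |]. apply Hw. lia.
Qed.

Lemma walk_edges_injective H p f n :
  walk H p f n -> (forall i j, i <= n -> j <= n -> p i = p j -> i = j) ->
  forall i j, i < n -> j < n -> f i = f j -> i = j.
Proof.
  intros Hw Hinj i j Hi Hj Hf.
  destruct (Hw i Hi) as [_ Hei], (Hw j Hj) as [_ Hej]. rewrite Hf in Hei.
  destruct (joins_same_edge _ _ _ _ _ Hei Hej) as [[Hij _] | [Hij Hji]].
  - apply Hinj; [lia | lia | exact Hij].
  - apply Hinj in Hij; [| lia | lia]. apply Hinj in Hji; lia.
Qed.

Lemma shortest_walk H (T : V -> Prop) p f n :
  walk H p f n -> T (p n) ->
  exists q g m, q 0 = p 0 /\ T (q m) /\ walk H q g m /\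
    (forall i, i < m -> ~ T (q i)) /\ (forall i j, i <= m -> j <= m -> q i = q j -> i = j).
Proof.
  intros Hw HT.
  destruct (dec_inh_nat_subset_has_unique_least_element
    (fun m => exists q g, q 0 = p 0 /\ T (q m) /\ walk H q g m) (fun m => classic _))
    as [m [[[q [g [Hq0 [HTm Hwm]]]] Hleast] _]]; [exists n, p, f; auto |].
  exists q, g, m. split; [exact Hq0 | split; [exact HTm | split; [exact Hwm | split]]].
  - intros i Hi HTi. enough (m <= i) by lia. apply Hleast.
    exists q, g. split; [exact Hq0 | split; [exact HTi | intros j Hj; apply Hwm; lia]].
  - (* a repeated vertex q a = q b would allow skipping the loop between them *)
    assert (Hloop : forall a b, a < b <= m -> q a <> q b).
    { intros a b Hab Hq. enough (m <= m - (b - a)) by lia. apply Hleast.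
      exists (fun i => if i <=? a then q i else q (i + (b - a))),
             (fun i => if i <? a then g i else g (i + (b - a))).
      split; [exact Hq0 | split].
      - destruct (Nat.leb_spec (m - (b - a)) a).
        + replace (m - (b - a)) with a by lia. rewrite Hq. replace b with m by lia. exact HTm.
        + replace (m - (b - a) + (b - a)) with m by lia. exact HTm.
      - intros i Hi. destruct (Nat.ltb_spec i a).
        + destruct (Nat.leb_spec i a), (Nat.leb_spec (S i) a); try lia. apply Hwm. lia.
        + destruct (Nat.leb_spec i a), (Nat.leb_spec (S i) a); try lia.
          * replace i with a in * by lia. rewrite Hq.
            replace (S a + (b - a)) with (S b) by lia. replace (a + (b - a)) with b by lia.
            apply Hwm. lia.
          * apply (Hwm (i + (b - a))). lia. }
    intros i j Hi Hj Hij. destruct (Nat.lt_total i j) as [Hlt | [Heq | Hlt]]; [| exact Heq |].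
    + exfalso. exact (Hloop i j ltac:(lia) Hij).
    + exfalso. exact (Hloop j i ltac:(lia) (eq_sym Hij)).
Qed.

Lemma cycle_orthogonal_separates D g x y :
  cycle_orthogonal D -> D g -> joins ends g x y -> ~ reach (fun h => ~ D h) x y.
Proof.
  intros HO Dg Hg Hxy.
  destruct (reach_walk g _ _ _ Hxy) as [p0 [f0 [n0 [Hp00 [Hpn0 Hw0]]]]].
  destruct (shortest_walk _ (fun z => z = y) p0 f0 n0 Hw0 Hpn0)
    as [p [f [n [Hp0 [Hpn [Hw [_ Hinj]]]]]]].
  rewrite Hp00 in Hp0.
  set (f' := fun i => if i =? n then g else f i).
  apply (HO (fun z => exists i, i < S n /\ f' i = z) g).
  - left. exists (S n), p, f'. split; [lia | split; [| split; [| split]]].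
    + intros i j Hi Hj. apply Hinj; lia.
    + intros i j Hi Hj. unfold f'.
      destruct (Nat.eqb_spec i n), (Nat.eqb_spec j n); intro Hij; [lia | | |].
      * exfalso. apply (Hw j); [lia | rewrite <- Hij; exact Dg].
      * exfalso. apply (Hw i); [lia | rewrite Hij; exact Dg].
      * apply (walk_edges_injective _ p f n Hw Hinj); [lia | lia | exact Hij].
    + intros i Hi. unfold f'. destruct (Nat.eqb_spec i n) as [-> | Hin].
      * replace ((n + 1) mod S n) with 0 by (replace (n + 1) with (S n) by lia;
          symmetry; apply Nat.Div0.mod_same).
        rewrite Hpn, Hp0. apply joins_sym, Hg.
      * rewrite Nat.mod_small by lia. replace (i + 1) with (S i) by lia. apply Hw. lia.
    + reflexivity.
  - exists n. split; [lia | unfold f'; rewrite Nat.eqb_refl; reflexivity].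
  - exact Dg.
  - intros z [i [Hi <-]] Dz. unfold f' in *. destruct (Nat.eqb_spec i n); [reflexivity |].
    exfalso. apply (Hw i); [lia | exact Dz].
Qed.

Lemma component_ray_from D x :
  cycle_orthogonal D -> has_ray_in ends (reach (fun h => ~ D h) x) ->
  exists r fr, r 0 = x /\ (forall i j, r i = r j -> i = j) /\
    forall i, ~ D (fr i) /\ joins ends (fr i) (r i) (r (S i)).
Proof.
  intros HO [v [Hv Hray]].
  destruct (choice (fun n g => joins ends g (v n) (v (S n))) (fun n => proj2 (Hray n)))
    as [fv Hfv].
  assert (HfvD : forall n, ~ D (fv n)).
  { intros n Dn. apply (cycle_orthogonal_separates D (fv n) (v n) (v (S n)) HO Dn (Hfv n)).
    apply (rt_trans _ _ _ x); [apply reach_sym |]; apply Hray. }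
  destruct (reach_walk (fv 0) _ _ _ (proj1 (Hray 0))) as [p0 [f0 [n0 [Hp00 [Hpn0 Hw0]]]]].
  destruct (shortest_walk _ (fun z => exists k, v k = z) p0 f0 n0 Hw0
              (ex_intro _ 0 (eq_sym Hpn0)))
    as [p [f [n [Hp0 [[k Hk] [Hw [Hfirst Hinj]]]]]]].
  exists (fun i => if i <=? n then p i else v (k + (i - n))),
         (fun i => if i <? n then f i else fv (k + (i - n))).
  split; [simpl; congruence | split].
  - intros i j. destruct (Nat.leb_spec i n), (Nat.leb_spec j n); intro Hij.
    + apply Hinj; assumption.
    + destruct (Nat.eq_dec i n) as [-> | Hin].
      * rewrite <- Hk in Hij. apply Hv in Hij. lia.
      * exfalso. apply (Hfirst i); [lia | eauto].
    + destruct (Nat.eq_dec j n) as [-> | Hjn].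
      * rewrite <- Hk in Hij. apply Hv in Hij. lia.
      * exfalso. apply (Hfirst j); [lia | eauto].
    + apply Hv in Hij. lia.
  - intro i. destruct (Nat.ltb_spec i n) as [Hin | Hin].
    + destruct (Nat.leb_spec i n), (Nat.leb_spec (S i) n); try lia. apply Hw, Hin.
    + split; [apply HfvD |]. destruct (Nat.leb_spec (S i) n); [lia |].
      replace (k + (S i - n)) with (S (k + (i - n))) by lia.
      destruct (Nat.leb_spec i n).
      * replace i with n by lia. rewrite Nat.sub_diag, Nat.add_0_r, <- Hk. apply Hfv.
      * apply Hfv.
Qed.

Lemma cycle_orthogonal_side_small D g x y :
  cycle_orthogonal D -> D g -> joins ends g x y ->
  has_ray_in ends (reach (fun h => ~ D h) x) ->
  ~ has_ray_in ends (reach (fun h => ~ D h) y).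
Proof.
  intros HO Dg Hg Hx Hy.
  destruct (component_ray_from D x HO Hx) as [ru [fu [Hu0 [Huinj Hu]]]].
  destruct (component_ray_from D y HO Hy) as [rw [fw [Hw0 [Hwinj Hw]]]].
  assert (Hreach : forall r fr, (forall i, ~ D (fr i) /\ joins ends (fr i) (r i) (r (S i))) ->
            forall m, reach (fun h => ~ D h) (r 0) (r m)).
  { intros r fr Hr m. apply (walk_reach _ r fr m m); [intros i _; apply Hr | lia]. }
  assert (Hdisj : forall a b, ru a <> rw b).
  { intros a b Hab. apply (cycle_orthogonal_separates D g x y HO Dg Hg).
    rewrite <- Hu0, <- Hw0. apply (rt_trans _ _ _ (ru a)); [exact (Hreach ru fu Hu a) |].
    rewrite Hab. apply reach_sym. exact (Hreach rw fw Hw b). }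
  (* the two rays joined by g form a double ray meeting D only in g *)
  set (vz := fun i => if (0 <? i)%Z then rw (Z.to_nat (i - 1)) else ru (Z.to_nat (- i))).
  set (fz := fun i => if (i =? 0)%Z then g else if (0 <? i)%Z then fw (Z.to_nat (i - 1))
                      else fu (Z.to_nat (- i - 1))).
  apply (HO (fun z => exists i, fz i = z) g).
  - right. exists vz, fz. split; [| split; [| reflexivity]].
    + intros i j. unfold vz.
      destruct (Z.ltb_spec 0 i), (Z.ltb_spec 0 j); intro Hij.
      * apply Hwinj in Hij. lia.
      * exfalso. exact (Hdisj _ _ (eq_sym Hij)).
      * exfalso. exact (Hdisj _ _ Hij).
      * apply Huinj in Hij. lia.
    + intro i. unfold vz, fz. destruct (Z.eqb_spec i 0) as [-> | Hi0].
      * simpl. rewrite Hu0, Hw0. exact Hg.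
      * destruct (Z.ltb_spec 0 i), (Z.ltb_spec 0 (i + 1)); try lia.
        -- replace (Z.to_nat (i + 1 - 1)) with (S (Z.to_nat (i - 1))) by lia. apply Hw.
        -- apply joins_sym.
           replace (Z.to_nat (- i)) with (S (Z.to_nat (- i - 1))) by lia.
           replace (Z.to_nat (- (i + 1))) with (Z.to_nat (- i - 1)) by lia. apply Hu.
  - exists 0%Z. reflexivity.
  - exact Dg.
  - intros z [i <-] Dz. unfold fz in *. destruct (Z.eqb_spec i 0); [reflexivity |].
    exfalso. destruct (Z.ltb_spec 0 i); [apply (Hw (Z.to_nat (i - 1))) | apply (Hu (Z.to_nat (- i - 1)))];
      exact Dz.
Qed.

End Graphs.

Section AlgebraicCycleMatroid.
Context {V E : Type} (ends : E -> V * V) (Ind : (E -> Prop) -> Prop).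
Hypothesis matroid_Ind : is_matroid Ind.
Hypothesis circuits_are_cycles :
  forall C, is_circuit Ind C <-> elementary_algebraic_cycle ends C.

Lemma cycle_orthogonal_not_dual_indep D e :
  cycle_orthogonal ends D -> D e -> ~ dual_indep Ind D.
Proof.
  intros HO De. apply not_dual_indep_iff. intros B HB. apply NNPP; intro Hn.
  assert (Be : ~ B e) by (intro; apply Hn; eauto).
  destruct (fundamental_circuit Ind matroid_Ind B e HB Be) as [C [HC [Ce HCB]]].
  apply (HO C e (proj1 (circuits_are_cycles C) HC) Ce De).
  intros x Cx Dx. destruct (HCB x Cx) as [Bx | ->]; [exfalso; apply Hn; eauto | reflexivity].
Qed.

Lemma small_side_not_dual_indep F :
  cut_with_small_side ends F -> (exists e, F e) -> ~ dual_indep Ind F.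
Proof.
  intros [A [[HFA HAF] HA]] [e Fe] [B [HB HBF]].
  apply (cycle_orthogonal_not_dual_indep (cut ends A) e (small_cut_cycle_orthogonal ends A HA)
           (HFA e Fe)).
  exists B. split; [exact HB | intros x Hx; apply HBF, HAF, Hx].
Qed.

Lemma cocircuit_cycle_orthogonal D : is_cocircuit Ind D -> cycle_orthogonal ends D.
Proof.
  intros HD C e HC Ce De.
  exact (circuit_cocircuit_not_single Ind matroid_Ind C D e (proj2 (circuits_are_cycles C) HC)
           HD Ce De).
Qed.

Lemma cocircuit_component_cut D e a b :
  is_cocircuit Ind D -> D e -> joins ends e a b ->
  ~ has_ray_in ends (reach ends (fun h => ~ D h) a) ->
  seteq D (cut ends (reach ends (fun h => ~ D h) a)).
Proof.
  intros HD De Hab Hsmall.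
  assert (HcutD : subset (cut ends (reach ends (fun h => ~ D h) a)) D).
  { intros h [c [d [Hh [Hc Hd]]]]. apply NNPP; intro Dh. apply Hd.
    apply (rt_trans _ _ _ c); [exact Hc | apply rt_step; exists h; auto]. }
  split; [| exact HcutD].
  apply (proj2 HD _ HcutD). apply small_side_not_dual_indep.
  - exists (reach ends (fun h => ~ D h) a). split; [split; intros h Hh; exact Hh | exact Hsmall].
  - exists e, a, b. split; [exact Hab | split; [apply rt_refl |]].
    exact (cycle_orthogonal_separates ends D e a b (cocircuit_cycle_orthogonal D HD) De Hab).
Qed.

Lemma cocircuit_skew_cut D : is_cocircuit Ind D -> skew_cut ends D.
Proof.
  intros HD.
  destruct (base_exists Ind matroid_Ind) as [B HB].
  destruct (proj1 (not_dual_indep_iff Ind D) (proj1 HD) B HB) as [e [De _]].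
  assert (Hab : joins ends e (fst (ends e)) (snd (ends e))) by (left; destruct (ends e); reflexivity).
  split; [exists e; exact De | split].
  - destruct (classic (has_ray_in ends (reach ends (fun h => ~ D h) (fst (ends e))))) as [Ha | Ha].
    + eexists. split; [apply (cocircuit_component_cut D e _ _ HD De (joins_sym ends _ _ _ Hab)) |];
        exact (cycle_orthogonal_side_small ends D e _ _ (cocircuit_cycle_orthogonal D HD) De Hab Ha).
    + eexists. split; [exact (cocircuit_component_cut D e _ _ HD De Hab Ha) | exact Ha].
  - intros F' HF' [HF'D HDF'] Hsmall. apply HDF'.
    exact (proj2 HD F' HF'D (small_side_not_dual_indep F' Hsmall HF')).
Qed.

Lemma skew_cut_cocircuit D : skew_cut ends D -> is_cocircuit Ind D.
Proof.
  intros [HDne [HDsmall HDmin]].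
  split; [exact (small_side_not_dual_indep D HDsmall HDne) |].
  intros D' HD'D HD'.
  destruct (cocircuit_in_codependent Ind matroid_Ind D' HD') as [D'' [HD'' HD''D']].
  destruct (cocircuit_skew_cut D'' HD'') as [HD''ne [HD''small _]].
  intros x Dx. apply HD''D'. apply NNPP; intro D''x.
  apply (HDmin D'' HD''ne); [| exact HD''small].
  split; [intros y D''y; apply HD'D, HD''D', D''y | intro HDD''; exact (D''x (HDD'' x Dx))].
Qed.

End AlgebraicCycleMatroid.

Theorem theorem5p1 (V E : Type) (ends : E -> V * V) (I : (E -> Prop) -> Prop) :
  is_matroid I ->
  (forall C, is_circuit I C <-> elementary_algebraic_cycle ends C) ->
  forall D, is_cocircuit I D <-> skew_cut ends D.
Proof.
  intros HM HC D. split.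
  - exact (cocircuit_skew_cut ends I HM HC D).
  - exact (skew_cut_cocircuit ends I HM HC D).
Qed.
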